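(* Let $\mathbf t=(t_1,t_2,t_3)\in\mathbb N^3$, $k=t_1+t_2+t_3+2$, and let $w\ge k$ be a constant integer. For each $n>w$ let $\mathbf J=(J_1,J_2,J_3)$ be a random vector with \[ \mathbb P(\mathbf J=\mathbf j)=\binom{j_1}{t_1}\binom{j_2}{t_2}\binom{j_3}{t_3}\Big/\binom nk\qquad\text{for }\mathbf j\in\mathbb N^3,\ j_1+j_2+j_3=n-2 . \] Let $(E_n)_{n\ge0}$ and $(T_n)_{n\ge0}$ be sequences of real numbers such that $E_n$, for $n\le w$, are given constants and \[ E_n=T_n+\sum_{j=0}^{n-2}E_j\sum_{r=1}^3\mathbb P(J_r=j)\qquad\text{for }n>w, \] and suppose $T_n=an+O(n^{1-\varepsilon})$ for constants $a$ and $\varepsilon>0$. Then \[ E_n\sim\frac{a}{\mathcal H}\,n\ln n\qquad(n\to\infty), \] where $\mathcal H=\sum_{r=1}^3\frac{t_r+1}{k+1}(H_{k+1}-H_{t_r+1})$ and $H_m=\sum_{i=1}^m 1/i$.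
   Context: In the paper, $E_n$ is the expected cost $\mathbb E[C_n]$ of Generalized Yaroslavskiy Quicksort, $T_n$ the expected partitioning cost $\mathbb E[T_n]$, and the base values for $n\le w$ are expected Insertionsort costs; here these are stated abstractly as numbers. *)

From Stdlib Require Import Reals Lra Lia.
From Coquelicot Require Import Coquelicot.
Open Scope R_scope.

Fixpoint binom (n k : nat) : nat :=
  match n, k with
  | _, O => 1%nat
  | O, S _ => 0%nat
  | S n', S k' => (binom n' k' + binom n' k)%nat
  end.

Fixpoint sumR (f : nat -> R) (m : nat) : R :=
  match m with
  | O => 0
  | S m' => sumR f m' + f m'
  end.

Definition harm (m : nat) : R := sumR (fun i => / INR (S i)) m.

Definition probJ (t1 t2 t3 n j1 j2 j3 : nat) : R :=
  if Nat.eqb (j1 + j2 + j3) (n - 2) then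
    INR (binom j1 t1 * binom j2 t2 * binom j3 t3)
      / INR (binom n (t1 + t2 + t3 + 2))
  else 0.

Definition comp (r j1 j2 j3 : nat) : nat :=
  match r with 1%nat => j1 | 2%nat => j2 | _ => j3 end.

Definition probJr (t1 t2 t3 n r j : nat) : R :=
  sumR (fun j1 => sumR (fun j2 =>
    if Nat.leb (j1 + j2) (n - 2) then
      (if Nat.eqb (comp r j1 j2 (n - 2 - j1 - j2)) j then
         probJ t1 t2 t3 n j1 j2 (n - 2 - j1 - j2) else 0)
    else 0) (S (n - 2))) (S (n - 2)).

Definition Hcal (t1 t2 t3 : nat) : R :=
  let k := (t1 + t2 + t3 + 2)%nat in
  INR (t1 + 1) / INR (k + 1) * (harm (k + 1) - harm (t1 + 1))
  + INR (t2 + 1) / INR (k + 1) * (harm (k + 1) - harm (t2 + 1))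
  + INR (t3 + 1) / INR (k + 1) * (harm (k + 1) - harm (t3 + 1)).

(* Write X n := (n+1) H_(n+1) (nharm below) and w_n(j) := sum_r P(J_r = j) (weightJ).
   Marginalising the law of J with the Chu-Vandermonde identity and with its harmonic
   analogue (vsum_one, vsum_harm) gives the exact moment identities
     sum_j (j+1) w_n(j) = n+1   and   sum_j X j w_n(j) = X n - Hcal (n+1).
   Hence c X n + K (n+1) is a supersolution of the recurrence as soon as
   T n <= c Hcal (n+1), and a subsolution when T n >= c Hcal (n+1).  As T n = a n + o(n),
   strong induction squeezes E n between ((a -/+ eta) / Hcal) X n -/+ K (n+1) for every
   eta > 0, and X n ~ n ln n. *)

From Pilot Require Import Defs.
From Stdlib Require Import Reals Lra Lia.
From Coquelicot Require Import Coquelicot.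
Open Scope R_scope.

Lemma sumR_ext (f g : nat -> R) (m : nat) :
  (forall i, (i < m)%nat -> f i = g i) -> sumR f m = sumR g m.
Proof.
  induction m as [|m IH]; intros Hfg; simpl; [reflexivity|].
  rewrite (Hfg m) by lia. rewrite IH; [reflexivity|intros; apply Hfg; lia].
Qed.

Lemma sumR_S (f : nat -> R) (m : nat) : sumR f (S m) = sumR f m + f m.
Proof. reflexivity. Qed.

Lemma sumR_0 (m : nat) : sumR (fun _ => 0) m = 0.
Proof. induction m as [|m IH]; simpl; [|rewrite IH]; lra. Qed.

Lemma sumR_zero (f : nat -> R) (m : nat) :
  (forall i, (i < m)%nat -> f i = 0) -> sumR f m = 0.
Proof. intros Hf. rewrite (sumR_ext f (fun _ => 0)) by exact Hf. apply sumR_0. Qed.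

Lemma sumR_add (f g : nat -> R) (m : nat) :
  sumR (fun i => f i + g i) m = sumR f m + sumR g m.
Proof. induction m as [|m IH]; simpl; [|rewrite IH]; lra. Qed.

Lemma sumR_scal (c : R) (f : nat -> R) (m : nat) :
  sumR (fun i => c * f i) m = c * sumR f m.
Proof. induction m as [|m IH]; simpl; [|rewrite IH]; lra. Qed.

Lemma sumR_le (f g : nat -> R) (m : nat) :
  (forall i, (i < m)%nat -> f i <= g i) -> sumR f m <= sumR g m.
Proof.
  induction m as [|m IH]; intros Hfg; simpl; [lra|].
  assert (sumR f m <= sumR g m) by (apply IH; intros; apply Hfg; lia).
  assert (f m <= g m) by (apply Hfg; lia). lra.
Qed.

Lemma sumR_nonneg (f : nat -> R) (m : nat) :
  (forall i, (i < m)%nat -> 0 <= f i) -> 0 <= sumR f m.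
Proof. intros Hf. rewrite <- (sumR_0 m). now apply sumR_le. Qed.

Lemma sumR_ge_term (f : nat -> R) (m j : nat) :
  (forall i, (i < m)%nat -> 0 <= f i) -> (j < m)%nat -> f j <= sumR f m.
Proof.
  induction m as [|m IH]; intros Hf Hj; simpl; [lia|].
  assert (0 <= sumR f m) by (apply sumR_nonneg; intros; apply Hf; lia).
  destruct (Nat.eq_dec j m) as [->|Hne]; [lra|].
  assert (f j <= sumR f m) by (apply IH; [intros; apply Hf|]; lia).
  assert (0 <= f m) by (apply Hf; lia). lra.
Qed.

Lemma sumR_shift (f : nat -> R) (m : nat) :
  sumR f (S m) = f 0%nat + sumR (fun i => f (S i)) m.
Proof. induction m as [|m IH]; simpl in *; [|rewrite IH]; lra. Qed.

Lemma sumR_rev (f : nat -> R) (m : nat) :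
  sumR f m = sumR (fun i => f (m - 1 - i)%nat) m.
Proof.
  induction m as [|m IH]; [reflexivity|].
  rewrite (sumR_shift (fun i => f (S m - 1 - i)%nat)), sumR_S, IH.
  replace (S m - 1 - 0)%nat with m by lia.
  rewrite (sumR_ext (fun i => f (m - 1 - i)%nat) (fun i => f (S m - 1 - S i)%nat))
    by (intros; f_equal; lia).
  lra.
Qed.

Lemma sumR_swap (X : nat -> nat -> R) (p q : nat) :
  sumR (fun i => sumR (fun j => X i j) q) p = sumR (fun j => sumR (fun i => X i j) p) q.
Proof.
  induction p as [|p IH]; simpl.
  - symmetry. now apply sumR_zero.
  - rewrite IH, <- sumR_add. reflexivity.
Qed.

Lemma sumR_if_le (g : nat -> R) (p q : nat) : (p < q)%nat ->
  sumR (fun j => if Nat.leb j p then g j else 0) q = sumR g (S p).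
Proof.
  intros Hpq. replace q with (S p + (q - S p))%nat by lia.
  induction (q - S p)%nat as [|d IH].
  - rewrite Nat.add_0_r. apply sumR_ext. intros i Hi.
    now rewrite (proj2 (Nat.leb_le i p)) by lia.
  - rewrite Nat.add_succ_r, sumR_S, IH.
    rewrite (proj2 (Nat.leb_gt _ p)) by lia. lra.
Qed.

Lemma sumR_delta (f : nat -> R) (x : nat) (v : R) (m : nat) : (x < m)%nat ->
  sumR (fun j => f j * (if Nat.eqb x j then v else 0)) m = f x * v.
Proof.
  induction m as [|m IH]; intros Hx; [lia|]. rewrite sumR_S.
  destruct (Nat.eq_dec x m) as [->|Hne].
  - rewrite Nat.eqb_refl, sumR_zero; [lra|].
    intros i Hi. rewrite (proj2 (Nat.eqb_neq m i)) by lia. lra.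
  - rewrite IH, (proj2 (Nat.eqb_neq x m)) by lia. lra.
Qed.

Lemma binom_0_r (n : nat) : binom n 0 = 1%nat.
Proof. now destruct n. Qed.

Lemma binom_1_r (n : nat) : binom n 1 = n.
Proof. induction n as [|n IH]; [reflexivity|]. simpl. rewrite binom_0_r, IH. lia. Qed.

Lemma binom_pos (n k : nat) : (k <= n)%nat -> (0 < binom n k)%nat.
Proof.
  revert k; induction n as [|n IH]; intros [|k] Hk; rewrite ?binom_0_r; try lia.
  simpl. specialize (IH k ltac:(lia)). lia.
Qed.

Lemma binom_absorb (j t : nat) : (S t * binom (S j) (S t) = S j * binom j t)%nat.
Proof.
  revert t; induction j as [|j IH]; intros [|t].
  - reflexivity.
  - simpl. lia.
  - rewrite binom_1_r, binom_0_r. lia.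
  - change (binom (S (S j)) (S (S t))) with (binom (S j) (S t) + binom (S j) (S (S t)))%nat.
    pose proof (IH t). pose proof (IH (S t)).
    change (binom (S j) (S t)) with (binom j t + binom j (S t))%nat in *. nia.
Qed.

Lemma INR_binom_absorb (j t : nat) :
  INR (binom (S j) (S t)) = INR (S j) * INR (binom j t) / INR (S t).
Proof.
  pose proof (f_equal INR (binom_absorb j t)) as H. rewrite !mult_INR in H.
  assert (INR (S t) <> 0) by (apply not_0_INR; lia).
  field_simplify_eq; [lra|assumption].
Qed.

Lemma INR_binom_pascal (n k : nat) :
  INR (binom (S n) (S k)) = INR (binom n k) + INR (binom n (S k)).
Proof. rewrite <- plus_INR. reflexivity. Qed.

Lemma harm_S (m : nat) : harm (S m) = harm m + / INR (S m).
Proof. reflexivity. Qed.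

Definition nharm (n : nat) : R := INR (S n) * harm (S n).

Definition vsum (N a b : nat) (F : nat -> R) : R :=
  sumR (fun x => INR (binom x a) * INR (binom (N - x) b) * F x) (S N).

Lemma vsum_S_0 (N a : nat) (F : nat -> R) :
  vsum (S N) a 0 F = vsum N a 0 F + INR (binom (S N) a) * F (S N).
Proof.
  unfold vsum. rewrite sumR_S, Nat.sub_diag, !binom_0_r.
  f_equal; [|simpl; lra]. apply sumR_ext. intros. now rewrite !binom_0_r.
Qed.

Lemma vsum_S_S (N a b : nat) (F : nat -> R) :
  vsum (S N) a (S b) F = vsum N a b F + vsum N a (S b) F.
Proof.
  unfold vsum. rewrite sumR_S, Nat.sub_diag, <- sumR_add. simpl (binom 0 (S b)).
  rewrite Rmult_0_r, Rmult_0_l, Rplus_0_r.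
  apply sumR_ext. intros x Hx. replace (S N - x)%nat with (S (N - x)) by lia.
  rewrite INR_binom_pascal. ring.
Qed.

Lemma vsum_one (N a b : nat) : vsum N a b (fun _ => 1) = INR (binom (S N) (a + b + 1)).
Proof.
  revert b; induction N as [|N IH]; intros [|b].
  - unfold vsum. simpl. rewrite Nat.add_0_r, Nat.add_1_r. destruct a; simpl; lra.
  - unfold vsum. simpl. rewrite Nat.add_1_r. destruct a; simpl; lra.
  - rewrite vsum_S_0, IH, Nat.add_0_r, Nat.add_1_r, (INR_binom_pascal (S N)). lra.
  - rewrite vsum_S_S, !IH. replace (a + S b + 1)%nat with (S (a + b + 1)) by lia.
    rewrite (INR_binom_pascal (S N)). lra.
Qed.

Lemma harm_pascal (N c : nat) (h : R) :
  INR (binom (S N) c) * (harm (S N) - harm c + h)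
  + INR (binom (S N) (S c)) * (harm (S N) - harm (S c) + h)
  = INR (binom (S (S N)) (S c)) * (harm (S (S N)) - harm (S c) + h).
Proof.
  pose proof (INR_binom_absorb (S N) c) as Habs.
  rewrite (INR_binom_pascal (S N) c) in *.
  assert (INR (S c) <> 0) by (apply not_0_INR; lia).
  assert (INR (S (S N)) <> 0) by (apply not_0_INR; lia).
  replace (INR (binom (S N) (S c)))
    with (INR (S (S N)) * INR (binom (S N) c) / INR (S c) - INR (binom (S N) c)) by lra.
  rewrite (harm_S (S N)), (harm_S c). field. auto.
Qed.

Lemma vsum_harm (N a b : nat) :
  vsum N a b harm = INR (binom (S N) (a + b + 1)) * (harm (S N) - harm (a + b + 1) + harm a).
Proof.
  revert b; induction N as [|N IH]; intros [|b].
  - unfold vsum, harm. simpl. rewrite Nat.add_0_r, Nat.add_1_r. destruct a; simpl; lra.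
  - unfold vsum, harm. simpl. rewrite Nat.add_1_r. destruct a; simpl; lra.
  - rewrite vsum_S_0, IH, Nat.add_0_r, Nat.add_1_r, <- harm_pascal. ring.
  - rewrite vsum_S_S, !IH. replace (a + S b + 1)%nat with (S (a + b + 1)) by lia.
    apply harm_pascal.
Qed.

Definition trisum (m : nat) (Phi : nat -> nat -> nat -> R) : R :=
  sumR (fun x => sumR (fun y =>
    if Nat.leb (x + y) m then Phi x y (m - x - y)%nat else 0) (S m)) (S m).

Lemma trisum_ext (m : nat) (Phi Psi : nat -> nat -> nat -> R) :
  (forall x y, (x + y <= m)%nat -> Phi x y (m - x - y)%nat = Psi x y (m - x - y)%nat) ->
  trisum m Phi = trisum m Psi.
Proof.
  intros H. unfold trisum. apply sumR_ext. intros x _. apply sumR_ext. intros y _.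
  destruct (Nat.leb (x + y) m) eqn:Hxy; [apply H, Nat.leb_le, Hxy|reflexivity].
Qed.

Lemma trisum_scal (m : nat) (c : R) (Phi : nat -> nat -> nat -> R) :
  c * trisum m Phi = trisum m (fun x y z => c * Phi x y z).
Proof.
  unfold trisum. rewrite <- sumR_scal. apply sumR_ext. intros x _.
  rewrite <- sumR_scal. apply sumR_ext. intros y _. destruct (Nat.leb _ _); ring.
Qed.

Lemma sumR_trisum (n m : nat) (Phi : nat -> nat -> nat -> nat -> R) :
  sumR (fun j => trisum m (Phi j)) n = trisum m (fun x y z => sumR (fun j => Phi j x y z) n).
Proof.
  unfold trisum. rewrite sumR_swap. apply sumR_ext. intros x _.
  rewrite sumR_swap. apply sumR_ext. intros y _.
  destruct (Nat.leb _ _); [reflexivity|apply sumR_0].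
Qed.

Lemma trisum_inner (m x : nat) (g : nat -> nat -> R) : (x <= m)%nat ->
  sumR (fun y => if Nat.leb (x + y) m then g y (m - x - y)%nat else 0) (S m)
  = sumR (fun y => g y (m - x - y)%nat) (S (m - x)).
Proof.
  intros Hx. rewrite <- (sumR_if_le (fun y => g y (m - x - y)%nat) (m - x) (S m)) by lia.
  apply sumR_ext. intros y _.
  destruct (Nat.leb_spec (x + y) m), (Nat.leb_spec y (m - x)); reflexivity || lia.
Qed.

Lemma trisum_swap12 (m : nat) (Phi : nat -> nat -> nat -> R) :
  trisum m Phi = trisum m (fun x y z => Phi y x z).
Proof.
  unfold trisum. rewrite sumR_swap. apply sumR_ext. intros x _. apply sumR_ext. intros y _.
  rewrite Nat.add_comm. replace (m - y - x)%nat with (m - x - y)%nat by lia. reflexivity.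
Qed.

Lemma trisum_swap23 (m : nat) (Phi : nat -> nat -> nat -> R) :
  trisum m Phi = trisum m (fun x y z => Phi x z y).
Proof.
  unfold trisum. apply sumR_ext. intros x Hx.
  rewrite (trisum_inner m x (Phi x)), (trisum_inner m x (fun y z => Phi x z y)) by lia.
  rewrite sumR_rev. apply sumR_ext. intros y Hy. f_equal; lia.
Qed.

Lemma trisum_binom_yz (m tb tc : nat) (f : nat -> R) :
  trisum m (fun x y z => f x * INR (binom y tb) * INR (binom z tc))
  = sumR (fun x => f x * INR (binom (S (m - x)) (tb + tc + 1))) (S m).
Proof.
  unfold trisum. apply sumR_ext. intros x Hx.
  rewrite (trisum_inner m x (fun y z => f x * INR (binom y tb) * INR (binom z tc))) by lia.
  rewrite <- vsum_one. unfold vsum. rewrite <- sumR_scal.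
  apply sumR_ext. intros y _. ring.
Qed.

Lemma sumR_trisum_indicator (m : nat) (c : nat -> nat -> nat -> nat) (f : nat -> R)
    (P : nat -> nat -> nat -> R) :
  (forall x y, (x + y <= m)%nat -> (c x y (m - x - y) <= m)%nat) ->
  sumR (fun j => f j * trisum m (fun x y z => if Nat.eqb (c x y z) j then P x y z else 0)) (S m)
  = trisum m (fun x y z => f (c x y z) * P x y z).
Proof.
  intros Hc.
  rewrite (sumR_ext _ (fun j => trisum m (fun x y z =>
             f j * (if Nat.eqb (c x y z) j then P x y z else 0))))
    by (intros; apply trisum_scal).
  rewrite sumR_trisum. apply trisum_ext. intros x y Hxy.
  apply sumR_delta. specialize (Hc x y Hxy). lia.
Qed.

Lemma sumR_absorb_vsum (m t s : nat) (F : nat -> R) : (1 <= s)%nat ->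
  sumR (fun x => INR (S x) * F (S x) * INR (binom x t) * INR (binom (S (m - x)) s)) (S m)
  = INR (S t) * vsum (S (S m)) (S t) s F.
Proof.
  intros Hs. unfold vsum. rewrite (sumR_S _ (S (S m))), (sumR_shift _ (S m)), Nat.sub_diag.
  destruct s as [|s]; [lia|]. simpl (binom 0 (S _)).
  rewrite INR_0, Rmult_0_r, !Rmult_0_l, Rplus_0_l, Rplus_0_r, <- sumR_scal.
  apply sumR_ext. intros x Hx.
  rewrite (INR_binom_absorb x t). replace (S (S m) - S x)%nat with (S (m - x)) by lia.
  assert (INR (S t) <> 0) by (apply not_0_INR; lia). field. assumption.
Qed.

Lemma trisum_moment_x (m ta tb tc : nat) (F : nat -> R) :
  trisum m (fun x y z =>
    INR (S x) * F (S x) * (INR (binom x ta) * INR (binom y tb) * INR (binom z tc)))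
  = INR (S ta) * vsum (S (S m)) (S ta) (tb + tc + 1) F.
Proof.
  rewrite <- sumR_absorb_vsum by lia. rewrite <- trisum_binom_yz.
  apply trisum_ext. intros. ring.
Qed.

(* [Defs.comp] is qualified because Coquelicot exports a [comp] (function composition). *)
Lemma probJr_trisum (t1 t2 t3 m r j : nat) :
  probJr t1 t2 t3 (S (S m)) r j = trisum m (fun x y z =>
    if Nat.eqb (Defs.comp r x y z) j then probJ t1 t2 t3 (S (S m)) x y z else 0).
Proof. unfold probJr. replace (S (S m) - 2)%nat with m by lia. reflexivity. Qed.

Definition weightJ (t1 t2 t3 n j : nat) : R :=
  probJr t1 t2 t3 n 1 j + probJr t1 t2 t3 n 2 j + probJr t1 t2 t3 n 3 j.

Lemma probJ_nonneg (t1 t2 t3 n j1 j2 j3 : nat) : 0 <= probJ t1 t2 t3 n j1 j2 j3.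
Proof.
  unfold probJ. destruct (Nat.eqb _ _); [|lra].
  unfold Rdiv. apply Rmult_le_pos; [apply pos_INR|].
  destruct (binom n (t1 + t2 + t3 + 2)) as [|d]; [rewrite INR_0, Rinv_0; lra|].
  left. apply Rinv_0_lt_compat, lt_0_INR. lia.
Qed.

Lemma weightJ_nonneg (t1 t2 t3 n j : nat) : 0 <= weightJ t1 t2 t3 n j.
Proof.
  assert (Hr : forall r, 0 <= probJr t1 t2 t3 n r j).
  { intros r. apply sumR_nonneg. intros. apply sumR_nonneg. intros.
    destruct (Nat.leb _ _); [destruct (Nat.eqb _ _); [apply probJ_nonneg|]|]; lra. }
  unfold weightJ. pose proof (Hr 1%nat). pose proof (Hr 2%nat). pose proof (Hr 3%nat). lra.
Qed.

Section Moments.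
Variables t1 t2 t3 m : nat.

Let D : R := INR (binom (S (S m)) (t1 + t2 + t3 + 2)).

Lemma sumR_probJr (r : nat) (f : nat -> R) :
  sumR (fun j => f j * probJr t1 t2 t3 (S (S m)) r j) (S m)
  = / D * trisum m (fun x y z =>
      f (Defs.comp r x y z) * (INR (binom x t1) * INR (binom y t2) * INR (binom z t3))).
Proof.
  rewrite (sumR_ext _ (fun j => f j * trisum m (fun x y z =>
      if Nat.eqb (Defs.comp r x y z) j then probJ t1 t2 t3 (S (S m)) x y z else 0)))
    by (intros; rewrite probJr_trisum; reflexivity).
  rewrite sumR_trisum_indicator by (intros; destruct r as [|[|[|]]]; simpl; lia).
  rewrite trisum_scal. apply trisum_ext. intros x y Hxy.
  unfold probJ. replace (S (S m) - 2)%nat with m by lia.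
  rewrite (proj2 (Nat.eqb_eq _ _)) by lia. rewrite !mult_INR. unfold D, Rdiv. ring.
Qed.

Lemma sumR_probJr_moment (r : nat) (F : nat -> R) : (1 <= r <= 3)%nat ->
  sumR (fun j => INR (S j) * F (S j) * probJr t1 t2 t3 (S (S m)) r j) (S m)
  = / D * (INR (S (Defs.comp r t1 t2 t3))
           * vsum (S (S m)) (S (Defs.comp r t1 t2 t3))
                  (t1 + t2 + t3 + 1 - Defs.comp r t1 t2 t3) F).
Proof.
  intros Hr. rewrite (sumR_probJr r (fun j => INR (S j) * F (S j))). f_equal.
  destruct r as [|[|[|[|r]]]]; try lia; simpl Defs.comp.
  - replace (t1 + t2 + t3 + 1 - t1)%nat with (t2 + t3 + 1)%nat by lia.
    apply trisum_moment_x.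
  - replace (t1 + t2 + t3 + 1 - t2)%nat with (t1 + t3 + 1)%nat by lia.
    rewrite trisum_swap12, <- trisum_moment_x. apply trisum_ext. intros. simpl. ring.
  - replace (t1 + t2 + t3 + 1 - t3)%nat with (t1 + t2 + 1)%nat by lia.
    rewrite trisum_swap23, trisum_swap12, <- trisum_moment_x.
    apply trisum_ext. intros. simpl. ring.
Qed.

Lemma comp_le_sum (r : nat) : (Defs.comp r t1 t2 t3 <= t1 + t2 + t3)%nat.
Proof. destruct r as [|[|[|r]]]; simpl; lia. Qed.

Let B : R := INR (binom (S (S (S m))) (S (t1 + t2 + t3 + 2))).

Lemma sumR_probJr_moment_one (r : nat) : (1 <= r <= 3)%nat ->
  sumR (fun j => INR (S j) * probJr t1 t2 t3 (S (S m)) r j) (S m)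
  = / D * B * INR (S (Defs.comp r t1 t2 t3)).
Proof.
  intros Hr.
  rewrite (sumR_ext _ (fun j => INR (S j) * (fun _ => 1) (S j) * probJr t1 t2 t3 (S (S m)) r j))
    by (intros; cbv beta; ring).
  rewrite (sumR_probJr_moment r (fun _ => 1)), vsum_one by exact Hr. unfold B.
  pose proof (comp_le_sum r).
  replace (S (Defs.comp r t1 t2 t3) + (t1 + t2 + t3 + 1 - Defs.comp r t1 t2 t3) + 1)%nat
    with (S (t1 + t2 + t3 + 2)) by lia.
  ring.
Qed.

Lemma sumR_probJr_moment_harm (r : nat) : (1 <= r <= 3)%nat ->
  sumR (fun j => nharm j * probJr t1 t2 t3 (S (S m)) r j) (S m)
  = / D * B * (INR (S (Defs.comp r t1 t2 t3))
               * (harm (S (S (S m))) - harm (S (t1 + t2 + t3 + 2))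
                  + harm (S (Defs.comp r t1 t2 t3)))).
Proof.
  intros Hr. unfold nharm. rewrite sumR_probJr_moment, vsum_harm by exact Hr. unfold B.
  pose proof (comp_le_sum r).
  replace (S (Defs.comp r t1 t2 t3) + (t1 + t2 + t3 + 1 - Defs.comp r t1 t2 t3) + 1)%nat
    with (S (t1 + t2 + t3 + 2)) by lia.
  ring.
Qed.

Lemma sumR_mul_weightJ (f : nat -> R) (n p : nat) :
  sumR (fun j => f j * weightJ t1 t2 t3 n j) p
  = sumR (fun j => f j * probJr t1 t2 t3 n 1 j) p + sumR (fun j => f j * probJr t1 t2 t3 n 2 j) p
    + sumR (fun j => f j * probJr t1 t2 t3 n 3 j) p.
Proof. rewrite <- !sumR_add. apply sumR_ext. intros. unfold weightJ. ring. Qed.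

Lemma INR_S_sum : INR (S t1) + INR (S t2) + INR (S t3) = INR (S (t1 + t2 + t3 + 2)).
Proof. rewrite <- !plus_INR. f_equal. lia. Qed.

Hypothesis Hk : (t1 + t2 + t3 + 2 <= S (S m))%nat.

Lemma binom_ratio : / D * B = INR (S (S (S m))) / INR (S (t1 + t2 + t3 + 2)).
Proof.
  assert (D <> 0) by (apply not_0_INR; pose proof (binom_pos _ _ Hk); lia).
  assert (INR (S (t1 + t2 + t3 + 2)) <> 0) by (apply not_0_INR; lia).
  unfold B. rewrite INR_binom_absorb. fold D. field. auto.
Qed.

Lemma weightJ_moment_one :
  sumR (fun j => INR (S j) * weightJ t1 t2 t3 (S (S m)) j) (S m) = INR (S (S (S m))).
Proof.
  rewrite (sumR_mul_weightJ (fun j => INR (S j))), !sumR_probJr_moment_one, binom_ratio by lia.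
  simpl Defs.comp.
  pose proof INR_S_sum as HS.
  assert (INR (S (t1 + t2 + t3 + 2)) <> 0) by (apply not_0_INR; lia).
  rewrite <- HS in *. field. assumption.
Qed.

Lemma weightJ_moment_harm :
  sumR (fun j => nharm j * weightJ t1 t2 t3 (S (S m)) j) (S m)
  = nharm (S (S m)) - INR (S (S (S m))) * Hcal t1 t2 t3.
Proof.
  rewrite sumR_mul_weightJ, !sumR_probJr_moment_harm, binom_ratio by lia.
  simpl Defs.comp. unfold nharm, Hcal. cbv zeta. rewrite !Nat.add_1_r.
  pose proof INR_S_sum as HS.
  assert (INR (S (t1 + t2 + t3 + 2)) <> 0) by (apply not_0_INR; lia).
  rewrite <- HS in *. field. assumption.
Qed.
End Moments.

Section Comparison.
Variables (W : nat -> nat -> R) (h : R) (w : nat).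
Hypothesis W_nonneg : forall n j, 0 <= W n j.
Hypothesis W_moment_one : forall n, (w < n)%nat ->
  sumR (fun j => INR (S j) * W n j) (n - 1) = INR (S n).
Hypothesis W_moment_harm : forall n, (w < n)%nat ->
  sumR (fun j => nharm j * W n j) (n - 1) = nharm n - INR (S n) * h.

Lemma supersolution_bound (E T : nat -> R) (c K : R) (N0 : nat) :
  (forall n, (w < n)%nat -> E n = T n + sumR (fun j => E j * W n j) (n - 1)) ->
  (w < N0)%nat ->
  (forall n, (N0 <= n)%nat -> T n <= c * INR (S n) * h) ->
  (forall j, (j < N0)%nat -> E j <= c * nharm j + K * INR (S j)) ->
  forall n, E n <= c * nharm n + K * INR (S n).
Proof.
  intros Hrec HN0 HT Hbase n. induction n as [n IH] using Wf_nat.lt_wf_ind.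
  destruct (Nat.lt_ge_cases n N0) as [Hn|Hn]; [auto|].
  rewrite Hrec by lia.
  assert (Hsum : sumR (fun j => E j * W n j) (n - 1)
    <= sumR (fun j => c * (nharm j * W n j) + K * (INR (S j) * W n j)) (n - 1)).
  { apply sumR_le. intros j Hj. pose proof (W_nonneg n j). specialize (IH j ltac:(lia)). nra. }
  rewrite sumR_add, !sumR_scal, W_moment_one, W_moment_harm in Hsum by lia.
  specialize (HT n Hn). nra.
Qed.

Lemma upper_bound (E T : nat -> R) (c : R) (N0 : nat) :
  (forall n, (w < n)%nat -> E n = T n + sumR (fun j => E j * W n j) (n - 1)) ->
  (w < N0)%nat ->
  (forall n, (N0 <= n)%nat -> T n <= c * INR (S n) * h) ->
  exists K, forall n, E n <= c * nharm n + K * INR (S n).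
Proof.
  intros Hrec HN0 HT.
  set (K := sumR (fun j => Rabs (E j - c * nharm j)) N0).
  exists K. apply (supersolution_bound E T c K N0); auto.
  intros j Hj.
  assert (Rabs (E j - c * nharm j) <= K)
    by (apply (sumR_ge_term (fun j => Rabs (E j - c * nharm j))); auto using Rabs_pos).
  assert (0 <= K) by (pose proof (Rabs_pos (E j - c * nharm j)); lra).
  assert (1 <= INR (S j)) by (apply (le_INR 1); lia).
  pose proof (Rle_abs (E j - c * nharm j)). nra.
Qed.

Lemma lower_bound (E T : nat -> R) (c : R) (N0 : nat) :
  (forall n, (w < n)%nat -> E n = T n + sumR (fun j => E j * W n j) (n - 1)) ->
  (w < N0)%nat ->
  (forall n, (N0 <= n)%nat -> c * INR (S n) * h <= T n) ->
  exists K, forall n, c * nharm n - K * INR (S n) <= E n.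
Proof.
  intros Hrec HN0 HT.
  destruct (upper_bound (fun n => - E n) (fun n => - T n) (- c) N0) as [K HK]; auto.
  - intros n Hn. rewrite (Hrec n Hn).
    rewrite (sumR_ext (fun j => - E j * W n j) (fun j => -1 * (E j * W n j))) by (intros; ring).
    rewrite sumR_scal. ring.
  - intros n Hn. specialize (HT n Hn). lra.
  - exists K. intros n. specialize (HK n). lra.
Qed.
End Comparison.

Lemma ln_1_plus_le (x : R) : -1 < x -> ln (1 + x) <= x.
Proof. intros Hx. rewrite <- (ln_exp x) at 2. apply ln_le; [lra|apply exp_ineq1_le]. Qed.

Lemma ln_le_harm (n : nat) : ln (INR (S n)) <= harm n.
Proof.
  induction n as [|n IH].
  - simpl. rewrite ln_1. unfold harm. simpl. lra.
  - rewrite harm_S. pose proof (lt_0_INR (S n) ltac:(lia)) as Hn.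
    pose proof (Rinv_0_lt_compat _ Hn).
    replace (INR (S (S n))) with (INR (S n) * (1 + / INR (S n)))
      by (rewrite (S_INR (S n)); field; lra).
    rewrite ln_mult by lra. pose proof (ln_1_plus_le (/ INR (S n))). lra.
Qed.

Lemma harm_S_le (n : nat) : harm (S n) <= 1 + ln (INR (S n)).
Proof.
  induction n as [|n IH].
  - unfold harm. simpl. rewrite ln_1. lra.
  - rewrite harm_S. pose proof (lt_0_INR (S n) ltac:(lia)) as Hn.
    assert (Hq : 0 < / INR (S (S n)) < 1).
    { rewrite (S_INR (S n)). split; [apply Rinv_0_lt_compat; lra|].
      rewrite <- Rinv_1. apply Rinv_lt_contravar; lra. }
    replace (INR (S n)) with (INR (S (S n)) * (1 + - / INR (S (S n)))) in IH
      by (rewrite (S_INR (S n)); field; lra).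
    rewrite ln_mult in IH by first [apply lt_0_INR; lia | lra].
    pose proof (ln_1_plus_le (- / INR (S (S n)))). lra.
Qed.

Lemma ln_INR_pos (n : nat) : (2 <= n)%nat -> 0 < ln (INR n).
Proof. intros Hn. rewrite <- ln_1. apply ln_increasing; [lra|]. apply (lt_INR 1). lia. Qed.

Lemma harm_S_ln_bounds (n : nat) : (1 <= n)%nat ->
  ln (INR n) <= harm (S n) <= ln (INR n) + 2.
Proof.
  intros Hn. assert (1 <= INR n) by (apply (le_INR 1); lia). split.
  - pose proof (ln_le_harm (S n)).
    assert (ln (INR n) <= ln (INR (S (S n)))) by (apply ln_le; rewrite ?S_INR; lra). lra.
  - pose proof (harm_S_le n).
    assert (ln (INR (S n)) <= ln 2 + ln (INR n)).
    { rewrite <- ln_mult by lra. apply ln_le; rewrite S_INR; lra. }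
    assert (ln 2 < 1).
    { rewrite <- (ln_exp 1). apply ln_increasing; [lra|]. pose proof (exp_ineq1 1). lra. }
    lra.
Qed.

Lemma is_lim_seq_ln_INR : is_lim_seq (fun n => ln (INR n)) p_infty.
Proof.
  apply (is_lim_comp_seq ln INR p_infty p_infty is_lim_ln_p); [|exact is_lim_seq_INR].
  exists 0%nat. intros. discriminate.
Qed.

Lemma is_lim_seq_inv_ln_INR : is_lim_seq (fun n => / ln (INR n)) 0.
Proof. apply (is_lim_seq_inv _ _ is_lim_seq_ln_INR). discriminate. Qed.

Lemma is_lim_seq_S_div_INR : is_lim_seq (fun n => INR (S n) / INR n) 1.
Proof.
  apply (is_lim_seq_ext_loc (fun n => 1 + / INR n)).
  - exists 1%nat. intros n Hn. assert (0 < INR n) by (apply lt_0_INR; lia).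
    rewrite S_INR. field. lra.
  - replace (Finite 1) with (Finite (1 + 0)) by (f_equal; ring).
    apply is_lim_seq_plus'; [apply is_lim_seq_const|].
    apply (is_lim_seq_inv _ _ is_lim_seq_INR). discriminate.
Qed.

Lemma is_lim_seq_harm_div_ln : is_lim_seq (fun n => harm (S n) / ln (INR n)) 1.
Proof.
  apply (is_lim_seq_le_le_loc (fun _ => 1) _ (fun n => 1 + 2 * / ln (INR n))).
  - exists 2%nat. intros n Hn. pose proof (ln_INR_pos n Hn).
    destruct (harm_S_ln_bounds n ltac:(lia)).
    split; apply (Rmult_le_reg_r (ln (INR n))); auto; field_simplify; lra.
  - apply is_lim_seq_const.
  - replace (Finite 1) with (Finite (1 + 2 * 0)) by (f_equal; ring).
    apply is_lim_seq_plus'; [apply is_lim_seq_const|].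
    exact (is_lim_seq_scal_l _ 2 0 is_lim_seq_inv_ln_INR).
Qed.

Lemma is_lim_seq_nharm_div : is_lim_seq (fun n => nharm n / (INR n * ln (INR n))) 1.
Proof.
  apply (is_lim_seq_ext_loc (fun n => (INR (S n) / INR n) * (harm (S n) / ln (INR n)))).
  - exists 2%nat. intros n Hn. pose proof (ln_INR_pos n Hn).
    assert (0 < INR n) by (apply lt_0_INR; lia). unfold nharm. field. lra.
  - replace (Finite 1) with (Finite (1 * 1)) by (f_equal; ring).
    exact (is_lim_seq_mult' _ _ _ _ is_lim_seq_S_div_INR is_lim_seq_harm_div_ln).
Qed.

Lemma is_lim_seq_S_div_nln : is_lim_seq (fun n => INR (S n) / (INR n * ln (INR n))) 0.
Proof.
  apply (is_lim_seq_ext_loc (fun n => (INR (S n) / INR n) * / ln (INR n))).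
  - exists 2%nat. intros n Hn. pose proof (ln_INR_pos n Hn).
    assert (0 < INR n) by (apply lt_0_INR; lia). field. lra.
  - replace (Finite 0) with (Finite (1 * 0)) by (f_equal; ring).
    exact (is_lim_seq_mult' _ _ _ _ is_lim_seq_S_div_INR is_lim_seq_inv_ln_INR).
Qed.

Lemma is_lim_seq_Rpower_neg (e : R) : 0 < e -> is_lim_seq (fun n => Rpower (INR n) (- e)) 0.
Proof.
  intros He. unfold Rpower.
  apply (is_lim_comp_seq exp _ m_infty 0 is_lim_exp_m); [exists 0%nat; intros; discriminate|].
  apply (is_lim_seq_ext (fun n => - (ln (INR n) * e))); [intros; ring|].
  apply (is_lim_seq_opp _ p_infty).
  apply (is_lim_seq_mult _ _ p_infty e); [exact is_lim_seq_ln_INR|apply is_lim_seq_const|].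
  apply is_Rbar_mult_p_infty_pos. exact He.
Qed.

Lemma Rpower_error_small (T : nat -> R) (a eps : R) : 0 < eps ->
  (exists (C : R) (N : nat), forall n : nat, (N <= n)%nat ->
     Rabs (T n - a * INR n) <= C * Rpower (INR n) (1 - eps)) ->
  forall d, 0 < d -> exists N, forall n, (N <= n)%nat -> Rabs (T n - a * INR n) <= d * INR n.
Proof.
  intros Heps [C [N HN]] d Hd.
  destruct (proj2 (is_lim_seq_spec _ _)
    (is_lim_seq_scal_l _ C _ (is_lim_seq_Rpower_neg eps Heps)) (mkposreal d Hd)) as [N1 HN1].
  exists (max (S N) N1). intros n Hn.
  assert (Hn0 : 0 < INR n) by (apply lt_0_INR; lia).
  specialize (HN1 n ltac:(lia)). simpl in HN1. rewrite Rmult_0_r, Rminus_0_r in HN1.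
  pose proof (Rle_abs (C * Rpower (INR n) (- eps))).
  specialize (HN n ltac:(lia)).
  replace (1 - eps) with (1 + - eps) in HN by ring.
  rewrite Rpower_plus, Rpower_1 in HN by exact Hn0. nra.
Qed.

Lemma linear_bounds_of_small_error (T : nat -> R) (a : R) :
  (forall d, 0 < d -> exists N, forall n, (N <= n)%nat -> Rabs (T n - a * INR n) <= d * INR n) ->
  forall eta, 0 < eta -> exists N, forall n, (N <= n)%nat ->
    (a - eta) * INR (S n) <= T n <= (a + eta) * INR (S n).
Proof.
  intros Hsmall eta Heta.
  destruct (Hsmall (eta / 2) ltac:(lra)) as [N1 HN1].
  destruct (INR_archimed (eta / 2) (Rabs a) ltac:(lra)) as [N2 HN2].
  exists (max N1 N2). intros n Hn. specialize (HN1 n ltac:(lia)).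
  assert (INR N2 <= INR n) by (apply le_INR; lia).
  pose proof (Rle_abs (T n - a * INR n)). pose proof (Rle_abs (- (T n - a * INR n))).
  pose proof (Rle_abs a). pose proof (Rle_abs (- a)).
  rewrite !Rabs_Ropp in *. rewrite S_INR. nra.
Qed.

Lemma is_lim_seq_div_of_bounds (u X Y D : nat -> R) (L : R) :
  is_lim_seq (fun n => X n / D n) 1 ->
  is_lim_seq (fun n => Y n / D n) 0 ->
  (exists N, forall n, (N <= n)%nat -> 0 < D n) ->
  (forall d, 0 < d -> exists K, forall n, u n <= (L + d) * X n + K * Y n) ->
  (forall d, 0 < d -> exists K, forall n, (L - d) * X n - K * Y n <= u n) ->
  is_lim_seq (fun n => u n / D n) L.
Proof.
  intros HX HY [N0 HD] Hup Hlo. apply is_lim_seq_spec. intros ep.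
  pose proof (cond_pos ep) as Hep. set (d := ep / 2).
  destruct (Hup d ltac:(unfold d; lra)) as [K1 HK1].
  destruct (Hlo d ltac:(unfold d; lra)) as [K2 HK2].
  assert (LU : is_lim_seq (fun n => (L + d) * (X n / D n) + K1 * (Y n / D n))
                 ((L + d) * 1 + K1 * 0))
    by exact (is_lim_seq_plus' _ _ _ _ (is_lim_seq_scal_l _ _ _ HX) (is_lim_seq_scal_l _ _ _ HY)).
  assert (LL : is_lim_seq (fun n => (L - d) * (X n / D n) - K2 * (Y n / D n))
                 ((L - d) * 1 - K2 * 0))
    by exact (is_lim_seq_minus' _ _ _ _ (is_lim_seq_scal_l _ _ _ HX) (is_lim_seq_scal_l _ _ _ HY)).
  destruct (proj2 (is_lim_seq_spec _ _) LU (mkposreal d ltac:(unfold d; lra))) as [N1 HN1].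
  destruct (proj2 (is_lim_seq_spec _ _) LL (mkposreal d ltac:(unfold d; lra))) as [N2 HN2].
  exists (max N0 (max N1 N2)). intros n Hn.
  specialize (HD n ltac:(lia)). specialize (HN1 n ltac:(lia)). specialize (HN2 n ltac:(lia)).
  simpl in HN1, HN2. apply Rabs_def2 in HN1. apply Rabs_def2 in HN2.
  assert (u n / D n <= (L + d) * (X n / D n) + K1 * (Y n / D n)).
  { replace ((L + d) * (X n / D n) + K1 * (Y n / D n)) with (((L + d) * X n + K1 * Y n) / D n)
      by (field; lra).
    apply Rmult_le_compat_r; [left; apply Rinv_0_lt_compat; lra|apply HK1]. }
  assert ((L - d) * (X n / D n) - K2 * (Y n / D n) <= u n / D n).
  { replace ((L - d) * (X n / D n) - K2 * (Y n / D n)) with (((L - d) * X n - K2 * Y n) / D n)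
      by (field; lra).
    apply Rmult_le_compat_r; [left; apply Rinv_0_lt_compat; lra|apply HK2]. }
  apply Rabs_def1; unfold d in *; lra.
Qed.

Lemma harm_lt (p q : nat) : (p < q)%nat -> harm p < harm q.
Proof.
  induction 1 as [|q _ IH]; rewrite harm_S;
    [pose proof (Rinv_0_lt_compat _ (lt_0_INR (S p) ltac:(lia)))
    |pose proof (Rinv_0_lt_compat _ (lt_0_INR (S q) ltac:(lia)))]; lra.
Qed.

Lemma Hcal_pos (t1 t2 t3 : nat) : 0 < Hcal t1 t2 t3.
Proof.
  assert (Hterm : forall t, (t <= t1 + t2 + t3)%nat ->
    0 < INR (t + 1) / INR (t1 + t2 + t3 + 2 + 1)
        * (harm (t1 + t2 + t3 + 2 + 1) - harm (t + 1))).
  { intros t Ht. apply Rmult_lt_0_compat.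
    - apply Rdiv_lt_0_compat; apply lt_0_INR; lia.
    - pose proof (harm_lt (t + 1) (t1 + t2 + t3 + 2 + 1) ltac:(lia)). lra. }
  unfold Hcal. cbv zeta.
  pose proof (Hterm t1 ltac:(lia)). pose proof (Hterm t2 ltac:(lia)).
  pose proof (Hterm t3 ltac:(lia)). lra.
Qed.

Lemma weightJ_moments (t1 t2 t3 n : nat) : (t1 + t2 + t3 + 2 <= n)%nat ->
  sumR (fun j => INR (S j) * weightJ t1 t2 t3 n j) (n - 1) = INR (S n)
  /\ sumR (fun j => nharm j * weightJ t1 t2 t3 n j) (n - 1) = nharm n - INR (S n) * Hcal t1 t2 t3.
Proof.
  intros Hn. destruct n as [|[|m]]; try lia. replace (S (S m) - 1)%nat with (S m) by lia.
  split; [apply weightJ_moment_one|apply weightJ_moment_harm]; exact Hn.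
Qed.

Theorem theorem6p2 (t1 t2 t3 w : nat) (E T : nat -> R) (a eps : R) :
  (t1 + t2 + t3 + 2 <= w)%nat ->
  (forall n : nat, (w < n)%nat ->
     E n = T n + sumR (fun j => E j *
             (probJr t1 t2 t3 n 1 j + probJr t1 t2 t3 n 2 j
              + probJr t1 t2 t3 n 3 j)) (n - 1)) ->
  0 < eps ->
  (exists (C : R) (N : nat), forall n : nat, (N <= n)%nat ->
     Rabs (T n - a * INR n) <= C * Rpower (INR n) (1 - eps)) ->
  is_lim_seq (fun n : nat => E n / (INR n * ln (INR n))) (a / Hcal t1 t2 t3).
Proof.
  intros Hw Hrec Heps HT.
  pose proof (Hcal_pos t1 t2 t3) as Hpos. set (h := Hcal t1 t2 t3) in *.
  assert (Hmom : forall n, (w < n)%nat ->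
    sumR (fun j => INR (S j) * weightJ t1 t2 t3 n j) (n - 1) = INR (S n)
    /\ sumR (fun j => nharm j * weightJ t1 t2 t3 n j) (n - 1) = nharm n - INR (S n) * h)
    by (intros; apply weightJ_moments; lia).
  pose proof (linear_bounds_of_small_error T a (Rpower_error_small T a eps Heps HT)) as HTlin.
  apply (is_lim_seq_div_of_bounds E nharm (fun n => INR (S n)) _ _
           is_lim_seq_nharm_div is_lim_seq_S_div_nln).
  - exists 2%nat. intros n Hn. apply Rmult_lt_0_compat; [apply lt_0_INR|apply ln_INR_pos]; lia.
  - intros d Hd. destruct (HTlin (d * h) ltac:(nra)) as [N HN].
    apply (upper_bound (weightJ t1 t2 t3) h w (weightJ_nonneg t1 t2 t3)
             (fun n Hn => proj1 (Hmom n Hn)) (fun n Hn => proj2 (Hmom n Hn))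
             E T _ (S (max w N)) Hrec); [lia|].
    intros n Hn. destruct (HN n ltac:(lia)).
    replace ((a / h + d) * INR (S n) * h) with ((a + d * h) * INR (S n)) by (field; lra). lra.
  - intros d Hd. destruct (HTlin (d * h) ltac:(nra)) as [N HN].
    apply (lower_bound (weightJ t1 t2 t3) h w (weightJ_nonneg t1 t2 t3)
             (fun n Hn => proj1 (Hmom n Hn)) (fun n Hn => proj2 (Hmom n Hn))
             E T _ (S (max w N)) Hrec); [lia|].
    intros n Hn. destruct (HN n ltac:(lia)).
    replace ((a / h - d) * INR (S n) * h) with ((a - d * h) * INR (S n)) by (field; lra). lra.
Qed.
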